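(* In the permutation model $\mathcal{N}_{\mathbb{R}}$, the family $\mathcal{A}=\{A_n: n\in\omega\}$ is denumerable but has no partial multiple choice function. Consequently, $\mathbf{CAC}(\leq 2^{\aleph_0})$ is false in $\mathcal{N}_{\mathbb{R}}$.
   Context: Permutation model $\mathcal{N}_{\mathbb{R}}$: Let $\mathcal{M}$ be a model of $\mathbf{ZFA}+\mathbf{AC}$ whose set of atoms is $A=\bigcup_{n\in\omega}A_n$, a pairwise disjoint union, where $A_n=\{a_{n,x}:x\in\mathbb{R}\}$ and $x\mapsto a_{n,x}$ is a bijection (in $\mathcal{M}$). Let $\leq_n$ be the linear order on $A_n$ given by $a_{n,x}\leq_n a_{n,y}\iff x\le y$. Let $\mathcal{G}$ be the group of all permutations $\pi$ of $A$ such that for every $n$, $\pi\upharpoonright A_n$ is an order-automorphism of $\langle A_n,\leq_n\rangle$. Every permutation of $A$ extends to an $\in$-automorphism of $\mathcal{M}$. Let $\mathcal{I}$ be the ideal of all $E\subseteq A$ with $E\subseteq\bigcup_{n\in S}A_n$ for some finite $S\subseteq\omega$. For $x\in\mathcal{M}$, $\mathrm{sym}_{\mathcal{G}}(x)=\{\phi\in\mathcal{G}:\phi(x)=x\}$ and $\mathrm{fix}_{\mathcal{G}}(E)=\{\phi\in\mathcal{G}:\phi(t)=t \text{ for all } t\in E\}$. Then $\mathcal{N}_{\mathbb{R}}=\{x\in\mathcal{M}: \text{for every } t\in \mathrm{TC}(\{x\}) \text{ there is } E\in\mathcal{I} \text{ with } \mathrm{fix}_{\mathcal{G}}(E)\subseteq\mathrm{sym}_{\mathcal{G}}(t)\}$,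 where $\mathrm{TC}$ is transitive closure. A partial multiple choice function of a family $\{X_j:j\in J\}$ is a function $f$ defined on an infinite $I\subseteq J$ with $f(j)$ a non-empty finite subset of $X_j$ for $j\in I$. $\mathbf{CAC}(\leq 2^{\aleph_0})$: every denumerable family of non-empty sets, each equipotent to a subset of $\mathbb{R}$, has a choice function. *)

(* Concrete rendering of the permutation model N_R.
   Atoms: a_{n,x} is represented by the pair (n, x) : nat * R, so
   A_n = { (n,x) | x : R } and <=_n is the order of R on the second
   coordinate. *)
From Stdlib Require Import Reals List.
Open Scope R_scope.

Definition atom : Type := (nat * R)%type.

Definition A_ (n : nat) : atom -> Prop := fun a => fst a = n.

(* The group G: a permutation of the atoms whose restriction to every A_n is
   an order automorphism of (A_n, <=_n).  Such a permutation necessarily maps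
   each A_n onto itself, hence is given by a family h of order automorphisms
   of (R, <=). *)
Definition order_aut (g : R -> R) : Prop :=
  (forall x y, x <= y <-> g x <= g y) /\ (forall y, exists x, g x = y).

Definition in_G (h : nat -> R -> R) : Prop := forall n, order_aut (h n).

Definition act (h : nat -> R -> R) (a : atom) : atom := (fst a, h (fst a) (snd a)).

Definition img (h : nat -> R -> R) (X : atom -> Prop) : atom -> Prop :=
  fun a => exists b, X b /\ act h b = a.

Definition in_ideal (E : atom -> Prop) : Prop :=
  exists S : list nat, forall a, E a -> In (fst a) S.

Definition fixes (h : nat -> R -> R) (E : atom -> Prop) : Prop :=
  forall a, E a -> act h a = a.

(* x has a support in I: some E in I with fix_G(E) included in sym_G(x),
   where "phi(x) = x" is given by the predicate symP. *)
Definition supported (symP : (nat -> R -> R) -> Prop) : Prop :=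
  exists E, in_ideal E /\ forall h, in_G h -> fixes h E -> symP h.

Definition finite_set (X : atom -> Prop) : Prop :=
  exists l : list atom, forall a, X a <-> In a l.
Definition infinite_nat (I : nat -> Prop) : Prop :=
  forall m, exists n, (m <= n)%nat /\ I n.

Definition partial_mcf (I : nat -> Prop) (f : nat -> atom -> Prop) : Prop :=
  infinite_nat I /\
  forall n, I n ->
    finite_set (f n) /\ (exists a, f n a) /\ (forall a, f n a -> A_ n a).

(* phi(f) = f for f = {(n, f n) : n in I}: since phi fixes every natural
   number (pure set), this means phi[f n] = f n for every n in I. *)
Definition sym_pmcf (I : nat -> Prop) (f : nat -> atom -> Prop)
  (h : nat -> R -> R) : Prop :=
  forall n, I n -> forall a, img h (f n) a <-> f n a.

(* All elements
   of TC({f}) other than f itself (naturals, finite sets of atoms, atoms,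
   Kuratowski pairs of these) have supports in I, so f is in N_R iff f is
   symmetric. *)
Definition pmcf_in_N (I : nat -> Prop) (f : nat -> atom -> Prop) : Prop :=
  supported (sym_pmcf I f).

(* The group G contains, for every n and t, the translation by t on A_n (identity
   elsewhere).  A support lies in finitely many A_m, so some A_n with n in the
   infinite domain I of a partial multiple choice function f escapes it; the
   translations on that A_n then fix the support but cannot fix the finite nonempty
   set f(n), since a large enough translation moves any of its points past all of
   them.  A choice function is a partial multiple choice function with singleton
   values, so none exists in N_R either, while each A_n injects into R by a map
   supported by A_n itself. *)
From Stdlib Require Import Reals List Lra Lia.
Open Scope R_scope.

Lemma A_inj m n : (forall a, A_ m a <-> A_ n a) -> m = n.
Proof. intros H. exact (proj1 (H (m, 0)) eq_refl). Qed.

Lemma in_G_img_A h n a : in_G h -> img h (A_ n) a <-> A_ n a.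
Proof.
  intros hG; destruct a as [k y]; unfold img, A_, act; simpl; split.
  - intros [[k' x] [Hk Heq]]; simpl in *; injection Heq; intros; subst; reflexivity.
  - intros ->. destruct (proj2 (hG n) y) as [x Hx].
    exists (n, x); simpl; split; [reflexivity | rewrite Hx; reflexivity].
Qed.

Definition translate_at (n : nat) (t : R) : nat -> R -> R :=
  fun k x => if Nat.eq_dec k n then x + t else x.

Lemma translate_at_in_G n t : in_G (translate_at n t).
Proof.
  intros k; unfold translate_at; destruct (Nat.eq_dec k n).
  - split; [intros x y; split; intro; lra | intros y; exists (y - t); ring].
  - split; [intros x y; tauto | intros y; exists y; reflexivity].
Qed.

Lemma act_translate_at n t x : act (translate_at n t) (n, x) = (n, x + t).
Proof. unfold act, translate_at; simpl; destruct (Nat.eq_dec n n); congruence. Qed.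

Lemma in_ideal_fixed_by_far_translations E :
  in_ideal E -> exists m, forall n t, (m <= n)%nat -> fixes (translate_at n t) E.
Proof.
  intros [L HL]; exists (S (list_max L)); intros n t Hn [k x] Ha.
  unfold act, translate_at; simpl.
  destruct (Nat.eq_dec k n) as [-> | _]; [exfalso | reflexivity].
  assert (Hmax := proj1 (list_max_le L (list_max L)) (le_n _)).
  rewrite Forall_forall in Hmax; specialize (Hmax n (HL _ Ha)); lia.
Qed.

Lemma finite_set_bounded X : finite_set X -> exists B, forall a, X a -> Rabs (snd a) <= B.
Proof.
  intros [l Hl].
  assert (Hbnd : exists B, forall a, In a l -> Rabs (snd a) <= B).
  { clear Hl; induction l as [| b l [B HB]]; [exists 0; intros a [] |].
    exists (Rmax (Rabs (snd b)) B); intros a [-> | Ha].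
    - apply Rmax_l.
    - eapply Rle_trans; [apply HB, Ha | apply Rmax_r]. }
  destruct Hbnd as [B HB]; exists B; intros a Ha; apply HB, Hl, Ha.
Qed.

Lemma finite_set_translate_out X n x : finite_set X -> exists t, ~ X (n, x + t).
Proof.
  intros HX; destruct (finite_set_bounded X HX) as [B HB].
  exists (Rabs B + Rabs x + 1); intros Hin; specialize (HB _ Hin); simpl in HB.
  pose proof (Rle_abs B); pose proof (Rle_abs (x + (Rabs B + Rabs x + 1))).
  pose proof (Rle_abs (- x)); rewrite Rabs_Ropp in *; lra.
Qed.

Lemma partial_mcf_not_in_N I f : partial_mcf I f -> ~ pmcf_in_N I f.
Proof.
  intros [Hinf Hf] [E [HE Hsym]].
  destruct (in_ideal_fixed_by_far_translations E HE) as [m Hfar].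
  destruct (Hinf m) as [n [Hmn HIn]].
  destruct (Hf n HIn) as [Hfin [[[k x] Ha] HA]].
  assert (Hk : k = n) by exact (HA _ Ha); subst k.
  destruct (finite_set_translate_out (f n) n x Hfin) as [t Hout]; apply Hout.
  apply (Hsym _ (translate_at_in_G n t) (Hfar n t Hmn) n HIn).
  exists (n, x); split; [exact Ha | apply act_translate_at].
Qed.

Lemma choice_partial_mcf (c : nat -> atom) :
  (forall n, A_ n (c n)) -> partial_mcf (fun _ => True) (fun n a => a = c n).
Proof.
  intros Hc; split; [intros m; exists m; split; [lia | exact I] |].
  intros n _; split; [| split; [exists (c n); reflexivity | intros a ->; apply Hc]].
  exists (c n :: nil); intros a; simpl; split; [auto | intros [-> | []]; reflexivity].
Qed.

Lemma choice_in_N (c : nat -> atom) :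
  supported (fun h => forall n, act h (c n) = c n) ->
  pmcf_in_N (fun _ => True) (fun n a => a = c n).
Proof.
  intros [E [HE Hsym]]; exists E; split; [exact HE |].
  intros h hG Hfix n _ a; specialize (Hsym h hG Hfix n); split.
  - intros [b [-> <-]]; exact Hsym.
  - intros ->; exists (c n); split; [reflexivity | exact Hsym].
Qed.

Lemma A_injects_into_R n :
  exists g : R -> R, (forall x y, g x = g y -> x = y) /\
                     supported (fun h => forall x, g (h n x) = g x).
Proof.
  exists (fun x => x); split; [auto |].
  exists (A_ n); split; [exists (n :: nil); intros a Ha; left; symmetry; exact Ha |].
  intros h _ Hfix x; specialize (Hfix (n, x) eq_refl).
  unfold act in Hfix; simpl in Hfix; injection Hfix; auto.
Qed.

Theorem proposition3p9 :
  (* (1) A = {A_n : n in omega} is denumerable in N_R: the map n |-> A_n is an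
     injection of omega onto A, and it is in N_R (fixed by every phi in G). *)
  ((forall m n, (forall a, A_ m a <-> A_ n a) -> m = n) /\
   (forall h, in_G h -> forall n a, img h (A_ n) a <-> A_ n a)) /\
  (* (2) A has no partial multiple choice function in N_R *)
  (forall (I : nat -> Prop) (f : nat -> atom -> Prop),
      partial_mcf I f -> ~ pmcf_in_N I f) /\
  (* (3) Consequently CAC(<= 2^aleph_0) fails in N_R, witnessed by A:
     every A_n is equipotent in N_R to a subset of R (via an injection
     A_n -> R lying in N_R; reals are pure, hence fixed by G), and A has no
     choice function in N_R. *)
  ((forall n, exists g : R -> R,
       (forall x y, g x = g y -> x = y) /\
       supported (fun h => forall x, g (h n x) = g x)) /\
   ~ (exists c : nat -> atom,
        (forall n, A_ n (c n)) /\
        supported (fun h => forall n, act h (c n) = c n))).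
Proof.
  split; [split | split; [| split]].
  - exact A_inj.
  - intros h hG n a; exact (in_G_img_A h n a hG).
  - exact partial_mcf_not_in_N.
  - exact A_injects_into_R.
  - intros [c [Hc Hsupp]].
    exact (partial_mcf_not_in_N _ _ (choice_partial_mcf c Hc) (choice_in_N c Hsupp)).
Qed.
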